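(* Let $\mathcal{S}=(Q,E,\delta,Q_0,\Sigma,\ell)$ be a labeled finite-state automaton, $Q_S\subset Q$ a set of secret states, and $K$ a positive integer with $K>2^{|Q|}-2$. Then $\mathcal{S}$ is infinite-step opaque with respect to $Q_S$ if and only if $\mathcal{S}$ is $K$-step opaque with respect to $Q_S$.
   Context: A labeled finite-state automaton is $\mathcal{S}=(Q,E,\delta,Q_0,\Sigma,\ell)$ with finite state set $Q$, finite event alphabet $E$, transition relation $\delta\subset Q\times E\times Q$, initial states $Q_0\subset Q$, finite output alphabet $\Sigma$, and labeling $\ell:E\to\Sigma\cup\{\epsilon\}$ ($\epsilon$ the empty word), extended morphically to event words. A run $q\xrightarrow{s}q'$ ($s\in E^*$) means a sequence of transitions from $q$ to $q'$ reading $s$ (the empty word gives $q=q'$). Infinite-step opacity: $\mathcal{S}$ is infinite-step opaque w.r.t. $Q_S$ if for every run $q_0\xrightarrow{s_1}q_1\xrightarrow{s_2}q_2$ with $q_0\in Q_0$ and $q_1\in Q_S$ there is a run $q_0'\xrightarrow{s_1'}q_1'\xrightarrow{s_2'}q_2'$ with $q_0'\in Q_0$, $q_1'\in Q\setminus Q_S$, $\ell(s_1)=\ell(s_1')$, $\ell(s_2)=\ell(s_2')$. $K$-step opacity ($K$ a positive integer): same as infinite-step opacity but the requirement is only imposed on runs with $|\ell(s_2)|\le K$. *)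

From mathcomp Require Import all_boot.
Set Implicit Arguments. Unset Strict Implicit. Unset Printing Implicit Defensive.

(* Q, E, Sigma are finite types; delta is a transition relation;
   Q0 a set of initial states; ell : E -> Sigma ∪ {epsilon}, encoded as
   option Sigma with None = epsilon. *)
Record LFSA := {
  st : finType;
  ev : finType;
  out : finType;
  delta : st -> ev -> st -> bool;
  init : {set st};
  lab : ev -> option out
}.

Definition labw (S : LFSA) (s : seq (ev S)) : seq (out S) := pmap (@lab S) s.

Inductive run (S : LFSA) : st S -> seq (ev S) -> st S -> Prop :=
| run_nil q : run q [::] q
| run_cons q e q1 s q' : delta q e q1 -> run q1 s q' -> run q (e :: s) q'.

Definition inf_step_opaque (S : LFSA) (QS : {set st S}) : Prop :=
  forall q0 q1 q2 s1 s2,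
    q0 \in init S -> q1 \in QS -> run q0 s1 q1 -> run q1 s2 q2 ->
    exists q0' q1' q2' s1' s2',
      [/\ q0' \in init S, q1' \notin QS, run q0' s1' q1', run q1' s2' q2' &
          labw s1 = labw s1' /\ labw s2 = labw s2'].

Definition K_step_opaque (S : LFSA) (QS : {set st S}) (K : nat) : Prop :=
  forall q0 q1 q2 s1 s2,
    q0 \in init S -> q1 \in QS -> run q0 s1 q1 -> run q1 s2 q2 ->
    size (labw s2) <= K ->
    exists q0' q1' q2' s1' s2',
      [/\ q0' \in init S, q1' \notin QS, run q0' s1' q1', run q1' s2' q2' &
          labw s1 = labw s1' /\ labw s2 = labw s2'].

From mathcomp Require Import all_boot zify.
From Stdlib Require Import ClassicalEpsilon.

Set Implicit Arguments.
Unset Strict Implicit.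
Unset Printing Implicit Defensive.

(* Let [producers w] be the set of states from which some run emits the
   observation w.  It is a congruence: [producers (u ++ v)] depends on [v]
   only through [producers v].  If the observation w after a secret state has
   length at least 2^|Q|, two of its |w| + 1 suffixes, drop i w and drop j w
   with i < j, have the same producers.  Cutting out the factor between i and
   j gives a shorter observation from the same secret state; by induction it is
   also produced through a non-secret state, and exchanging the suffix back
   yields a run through that state emitting w.  So K-step opacity for
   K >= 2^|Q| - 1 propagates to every length. *)

Lemma card_finset (T : finType) : #|{set T}| = 2 ^ #|T|.
Proof. by rewrite -[LHS]cardsT -powersetT card_powerset cardsT. Qed.

Lemma ord_pigeonhole (T : finType) n (f : 'I_n -> T) :
  #|T| < n -> exists i j : 'I_n, i < j /\ f i = f j.
Proof.
move=> ltTn; have /injectivePn [i [j neq_ij eq_fij]] : ~~ injectiveb f.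
  by apply/negP => /injectiveP/leq_card; rewrite card_ord; lia.
case: (ltngtP i j) => [lt_ij | lt_ji | /val_inj eq_ij].
- by exists i, j.
- by exists j, i.
- by rewrite eq_ij eqxx in neq_ij.
Qed.

Section Runs.
Variable S : LFSA.
Implicit Types (p q r : st S) (e : ev S) (s t : seq (ev S)) (u v w : seq (out S)).

Lemma labw_cat s t : labw (s ++ t) = labw s ++ labw t.
Proof. exact: pmap_cat. Qed.

Lemma run_cat q p r s t : run q s p -> run p t r -> run q (s ++ t) r.
Proof. by elim=> // {}q e q1 {}s p' step _ IH /IH; apply: run_cons. Qed.

Lemma run_consE q e s r : run q (e :: s) r -> exists2 q1, delta q e q1 & run q1 s r.
Proof. by move=> run_es; inversion run_es; exists q1. Qed.

Lemma run_cat_split q r s t : run q (s ++ t) r -> exists2 p, run q s p & run p t r.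
Proof.
elim: s q => [|e s IH] q /=; first by exists q => //; constructor.
case/run_consE=> q1 step /IH [p run_s run_t].
by exists p => //; apply: run_cons step run_s.
Qed.

Lemma labw_eq_cat s u v :
  labw s = u ++ v -> exists n, labw (take n s) = u /\ labw (drop n s) = v.
Proof.
elim: s u => [|e s IH] [|a u] eq_s; try by exists 0; rewrite take0 drop0.
move: eq_s; rewrite {1}/labw /=; case lab_e: (lab e) => [b|] /=.
  by case=> <- /IH [n [<- <-]]; exists n.+1; rewrite /labw /= lab_e.
by move=> /(IH (a :: u)) [n [<- <-]]; exists n.+1; rewrite /labw /= lab_e.
Qed.

Definition producers w : {set st S} :=
  [set q | excluded_middle_informative (exists s q', run q s q' /\ labw s = w)].

Lemma producersP q w :
  reflect (exists s q', run q s q' /\ labw s = w) (q \in producers w).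
Proof. by rewrite inE; case: excluded_middle_informative => /= H; constructor. Qed.

Lemma producers_catl u v v' :
  producers v = producers v' -> producers (u ++ v) = producers (u ++ v').
Proof.
suff sub_cat v1 v2 : producers v1 = producers v2 ->
    {subset producers (u ++ v1) <= producers (u ++ v2)}.
  by move=> eq_v; apply/setP => q; apply/idP/idP; apply: sub_cat.
move=> eq_v q /producersP [s [r [run_s /labw_eq_cat [n [lab_u lab_v]]]]].
rewrite -(cat_take_drop n s) in run_s.
have [p run_u run_v] := run_cat_split run_s.
have /producersP [t [r' [run_t lab_t]]] : p \in producers v2.
  by rewrite -eq_v; apply/producersP; exists (drop n s), r.
apply/producersP; exists (take n s ++ t), r'; split; first exact: run_cat run_t.
by rewrite labw_cat lab_u lab_t.
Qed.

Lemma repeated_suffix_producers w : 2 ^ #|st S| <= size w ->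
  exists i j, [/\ i < j, j <= size w & producers (drop i w) = producers (drop j w)].
Proof.
move=> long_w; have [|i [j [lt_ij eq_ij]]] :=
  ord_pigeonhole (fun i : 'I_(size w).+1 => producers (drop i w)).
  by rewrite card_finset ltnS.
by exists i, j; split=> //; rewrite -ltnS.
Qed.

End Runs.

Section Opacity.
Variables (S : LFSA) (QS : {set st S}).

Lemma K_step_opaque_le m n : m <= n -> K_step_opaque QS n -> K_step_opaque QS m.
Proof.
move=> le_mn opq q0 q1 q2 s1 s2 init_q0 secret_q1 run_s1 run_s2 short_s2.
exact: opq init_q0 secret_q1 run_s1 run_s2 (leq_trans short_s2 le_mn).
Qed.

Lemma inf_step_opaqueP : inf_step_opaque QS <-> forall K, K_step_opaque QS K.
Proof.
split=> [opq K q0 q1 q2 s1 s2 init_q0 secret_q1 run_s1 run_s2 _ | opq].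
  exact: opq init_q0 secret_q1 run_s1 run_s2.
move=> q0 q1 q2 s1 s2 init_q0 secret_q1 run_s1 run_s2.
exact: opq init_q0 secret_q1 run_s1 run_s2 (leqnn _).
Qed.

Lemma K_step_opaqueS K :
  2 ^ #|st S| <= K.+1 -> K_step_opaque QS K -> K_step_opaque QS K.+1.
Proof.
move=> large_K opq q0 q1 q2 s1 s2 init_q0 secret_q1 run_s1 run_s2 short_s2.
have [le_s2K|long_s2] := leqP (size (labw s2)) K.
  exact: opq init_q0 secret_q1 run_s1 run_s2 le_s2K.
set w := labw s2 in short_s2 long_s2 *.
have [i [j [lt_ij le_jw eq_ij]]] := repeated_suffix_producers (leq_trans large_K long_s2).
have /producersP [s2' [q2' [run_s2' lab_s2']]] : q1 \in producers (take i w ++ drop j w).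
  by rewrite -(producers_catl _ eq_ij) cat_take_drop; apply/producersP; exists s2, q2.
have [|q0' [q1' [q2'' [s1' [s2'' [init_q0' public_q1' run_s1' run_s2'' [lab_s1 lab_s2]]]]]]] :=
  opq q0 q1 q2' s1 s2' init_q0 secret_q1 run_s1 run_s2'.
  by rewrite lab_s2' size_cat size_takel ?size_drop; lia.
have /producersP [s3 [q3 [run_s3 lab_s3]]] : q1' \in producers w.
  rewrite -(cat_take_drop i w) (producers_catl _ eq_ij).
  by apply/producersP; exists s2'', q2''; rewrite -lab_s2 lab_s2'.
by exists q0', q1', q3, s1', s3.
Qed.

Lemma K_step_opaque_inf K :
  2 ^ #|st S| <= K.+1 -> K_step_opaque QS K -> inf_step_opaque QS.
Proof.
move=> large_K opq; apply/inf_step_opaqueP; elim=> [|m IH].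
  exact: K_step_opaque_le opq.
have [le_mK | lt_Km] := leqP m.+1 K; first exact: K_step_opaque_le opq.
by apply: K_step_opaqueS IH; apply: leq_trans large_K _.
Qed.

End Opacity.

Theorem corollary2 (S : LFSA) (QS : {set st S}) (K : nat) :
  0 < K -> 2 ^ #|st S| - 2 < K ->
  (inf_step_opaque QS <-> K_step_opaque QS K).
Proof.
move=> _ large_K; split; first by move/inf_step_opaqueP.
by apply: K_step_opaque_inf; lia.
Qed.
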